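(* Let $p$ be a prime and $X$ a countable set. For every $A\in\mathcal{B}(\mathbb{Q}_p(X))$ we have $\|A\|=\max\{|A_{ij}|_p: i,j\in X\}$ (in particular the maximum exists).
   Context: $\mathbb{Q}_p(X)$ is the set of maps $\xi:X\to\mathbb{Q}_p$ with $|\xi(i)|_p\le1$ for all but finitely many $i$, a $\mathbb{Z}_p$-module under coordinatewise operations, with the topology $\tau$ in which $A\subseteq\mathbb{Q}_p(X)$ is open iff for every finite $P\subseteq X$ the set $A\cap\big(\prod_{i\in P}\mathbb{Q}_p\times\prod_{j\in X\setminus P}\mathbb{Z}_p\big)$ is open in the product topology. $\mathcal{B}(\mathbb{Q}_p(X))$ is the set of $\tau$-continuous $\mathbb{Z}_p$-linear maps. Norm $\|\xi\|=\max_i|\xi(i)|_p$, operator norm $\|A\|=\sup_{\|\xi\|\le1}\|A\xi\|$. Matrix entries: $A_{ij}=(A\delta_j)(i)$, where $\delta_j(j)=1$ and $\delta_j(y)=0$ for $y\ne j$. *)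

From HB Require Import structures.
From mathcomp Require Import all_boot all_order all_algebra.
From mathcomp Require Import all_classical all_reals ereal.
Import Order.TTheory GRing.Theory Num.Theory.
Local Open Scope classical_set_scope.
Local Open Scope ring_scope.

(* The p-adic numbers Q_p, represented as the inverse limit                *)
(*   Q_p = lim_n Z[1/p] / p^n Z.                                           *)
(* An element x of Q_p is a sequence x : nat -> rat where x n is the       *)
(* canonical representative in [0, p^n) of x mod p^n Z_p                   *)
(* (a rational whose denominator is a power of p), and the sequence is     *)
(* compatible: x n = x (n+1) mod p^n.  This representation is canonical,  *)
(* so equality of p-adic numbers is equality of sequences.                 *)

Definition ratmod (r q : rat) : rat := r - q * (Num.floor (r / q))%:~R.

Definition ppow (p n : nat) : rat := (p%:R) ^+ n.

Definition qp (p : nat) := nat -> rat.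

Definition isQp (p : nat) (x : qp p) : Prop :=
  forall n : nat,
    p.-nat `|denq (x n)|%N /\ 0 <= x n /\ x n < ppow p n /\
    x n = ratmod (x n.+1) (ppow p n).

Definition qp_dexp (p : nat) (x : qp p) : nat := logn p `|denq (x 0%N)|%N.

Definition qp_zero (p : nat) : qp p := fun _ => 0.
Definition qp_one (p : nat) : qp p := fun n => ratmod 1 (ppow p n).
Definition qp_add (p : nat) (x y : qp p) : qp p :=
  fun n => ratmod (x n + y n) (ppow p n).
Definition qp_opp (p : nat) (x : qp p) : qp p :=
  fun n => ratmod (- x n) (ppow p n).
(* product: (xy) mod p^n is computed from x mod p^(n+l), y mod p^(n+k),
   where p^k, p^l are the denominators of x, y. *)
Definition qp_mul (p : nat) (x y : qp p) : qp p :=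
  fun n => ratmod (x (n + qp_dexp p y)%N * y (n + qp_dexp p x)%N) (ppow p n).

Definition in_pnZp (p : nat) (x : qp p) (n : int) : Prop :=
  if (0 <= n) then x `|n|%N = 0
  else (ppow p `|n|%N * x 0%N) \is a Num.int.

(* p-adic absolute value |x|_p = p^(-v(x)),  v(x) = sup {n | x \in p^n Z_p}
   (so |0|_p = 0). *)
Definition padic_abs (R : realType) (p : nat) (x : qp p) : R :=
  inf [set (p%:R : R) ^ (- n) | n in [set n : int | in_pnZp p x n]].

Definition isZp (R : realType) (p : nat) (x : qp p) : Prop :=
  isQp p x /\ padic_abs R p x <= 1.

Definition QpX (R : realType) (p : nat) (X : Type) : set (X -> qp p) :=
  [set xi | (forall i, isQp p (xi i)) /\
            finite_set [set i | 1 < padic_abs R p (xi i)]].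

Definition vadd (p : nat) (X : Type) (xi eta : X -> qp p) : X -> qp p :=
  fun i => qp_add p (xi i) (eta i).
Definition vscale (p : nat) (X : Type) (a : qp p) (xi : X -> qp p) : X -> qp p :=
  fun i => qp_mul p a (xi i).

Definition slab (R : realType) (p : nat) (X : Type) (P : set X) : set (X -> qp p) :=
  [set xi | (forall i, isQp p (xi i)) /\ (forall j, ~ P j -> padic_abs R p (xi j) <= 1)].

(* U (a subset of S_P) is open in the product topology of S_P: around each
   point it contains a basic open set (finitely many coordinates within
   distance e). *)
Definition prod_open (R : realType) (p : nat) (X : Type) (P : set X)
    (U : set (X -> qp p)) : Prop :=
  forall xi, U xi -> exists F : set X, finite_set F /\
    exists e : R, 0 < e /\
      forall eta, slab R p X P eta ->
        (forall i, F i -> padic_abs R p (qp_add p (eta i) (qp_opp p (xi i))) < e) ->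
        U eta.

Definition tau_open (R : realType) (p : nat) (X : Type) (A : set (X -> qp p)) : Prop :=
  A `<=` QpX R p X /\
  forall P : set X, finite_set P -> prod_open R p X P (A `&` slab R p X P).

(* B(Q_p(X)): tau-continuous Z_p-linear maps Q_p(X) -> Q_p(X).  A map is
   given as a function on X -> qp p; only its values on Q_p(X) matter. *)
Definition isB (R : realType) (p : nat) (X : Type)
    (A : (X -> qp p) -> (X -> qp p)) : Prop :=
  [/\ (forall xi, QpX R p X xi -> QpX R p X (A xi)),
      (forall xi eta, QpX R p X xi -> QpX R p X eta ->
         A (vadd p X xi eta) = vadd p X (A xi) (A eta)),
      (forall a xi, isZp R p a -> QpX R p X xi -> A (vscale p X a xi) = vscale p X a (A xi)) &
      (forall B, tau_open R p X B -> tau_open R p X (QpX R p X `&` (A @^-1` B)))].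

Definition vnorm (R : realType) (p : nat) (X : Type) (xi : X -> qp p) : R :=
  sup (range (fun i => padic_abs R p (xi i))).

Definition opnorm (R : realType) (p : nat) (X : Type)
    (A : (X -> qp p) -> (X -> qp p)) : \bar R :=
  ereal_sup [set (vnorm R p X (A xi))%:E | xi in [set xi | QpX R p X xi /\ vnorm R p X xi <= 1]].

Definition delta (p : nat) (X : eqType) (j : X) : X -> qp p :=
  fun y => if y == j then qp_one p else qp_zero p.

Definition mxentry (p : nat) (X : eqType) (A : (X -> qp p) -> (X -> qp p))
    (i j : X) : qp p := A (delta p X j) i.

(* A is Z_p-linear and tau-continuous at 0.  Continuity at 0 gives, for each
   i and n, a finite F such that (A xi)(i) is in p^n Z_p for every xi in the
   unit ball Z_p(X) vanishing on F; splitting xi into its restriction to F, a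
   finite Z_p-combination of the delta_j, and such a remainder shows that
   (A xi)(i) is in p^n Z_p as soon as every A_ij is.  As |x|_p <= p^-n exactly
   when x is in p^n Z_p, this bounds ||A|| by a maximal |A_ij|, and
   ||A delta_j|| >= |A_ij| gives the converse.  A maximal entry exists:
   continuity at 0 puts all but finitely many columns in Z_p, each column has
   only finitely many entries outside Z_p, and on p-adic integers the value
   p^-n is attained at a least n. *)

From mathcomp Require Import all_boot all_order all_algebra.
From mathcomp Require Import all_classical all_reals ereal.
From mathcomp Require Import ring lra zify.

Set Implicit Arguments.
Unset Strict Implicit.
Unset Printing Implicit Defensive.

Import Order.TTheory GRing.Theory Num.Theory.
Local Open Scope classical_set_scope.
Local Open Scope ring_scope.

Definition rat_eqmod (q r s : rat) : Prop := (r - s) / q \is a Num.int.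

Lemma rat_eqmod_sym q r s : rat_eqmod q r s -> rat_eqmod q s r.
Proof. by rewrite /rat_eqmod -opprB mulNr rpredN. Qed.

Lemma rat_eqmod_trans q r s t :
  rat_eqmod q r s -> rat_eqmod q s t -> rat_eqmod q r t.
Proof.
rewrite /rat_eqmod => rs st.
by rewrite -[r](subrK s) -addrA mulrDl rpredD.
Qed.

Lemma rat_eqmod_ratmod q r : q != 0 -> rat_eqmod q r (ratmod r q).
Proof. by move=> q0; rewrite /rat_eqmod /ratmod opprB addrC subrK mulrC mulKf. Qed.

Lemma ratmod_eqmod q r s : 0 < q -> rat_eqmod q r s -> ratmod r q = ratmod s q.
Proof.
move=> q0 rs; rewrite /ratmod -[r](subrK s) [r - s + s]addrC mulrDl floorDrz //.
by rewrite rmorphD /= (floorK rs) mulrDr mulrCA divff ?gt_eqF // mulr1; ring.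
Qed.

Lemma ratmod_bounds q r : 0 < q -> 0 <= ratmod r q < q.
Proof.
move=> q0; have /andP[lo hi] := floor_itv (r / q).
have -> : ratmod r q = q * (r / q - (Num.floor (r / q))%:~R).
  by rewrite /ratmod mulrBr mulrCA divff ?mulr1 ?gt_eqF.
rewrite pmulr_rge0 // gtr_pMr // subr_ge0 lo /=.
by rewrite intrD in hi; lra.
Qed.

Lemma ratmod_id q r : 0 <= r < q -> ratmod r q = r.
Proof.
move=> /andP[r0 rq]; have q0 : 0 < q by apply: le_lt_trans rq.
rewrite /ratmod (_ : Num.floor (r / q) = 0) ?mulr0 ?subr0 //.
apply: floor_def; rewrite add0r rmorph1 mulr0z divr_ge0 ?(ltW q0) //=.
by rewrite ltr_pdivrMr // mul1r.
Qed.

Lemma ratmod0 q : ratmod 0 q = 0.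
Proof. by rewrite /ratmod mul0r floor0 mulr0 subrr. Qed.

Lemma ratmod1 r : ratmod r 1 = r - (Num.floor r)%:~R.
Proof. by rewrite /ratmod divr1 mul1r. Qed.

Section PrimePowers.
Variable p : nat.
Hypothesis p_gt0 : (0 < p)%N.

Lemma ppow_gt0 n : 0 < ppow p n.
Proof. by rewrite /ppow exprn_gt0 // ltr0n. Qed.

Lemma ppow_neq0 n : ppow p n != 0.
Proof. by rewrite gt_eqF // ppow_gt0. Qed.

Lemma ppowD m n : ppow p (m + n) = ppow p m * ppow p n.
Proof. exact: exprD. Qed.

Lemma ppow_int n : ppow p n \is a Num.int.
Proof. by rewrite rpredX // rpred_nat. Qed.

Lemma ppow_intM k r : r \is a Num.int -> ppow p k * r \is a Num.int.
Proof. exact/rpredM/ppow_int. Qed.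

Lemma rat_eqmod_ppow_le m l r s :
  (m <= l)%N -> rat_eqmod (ppow p l) r s -> rat_eqmod (ppow p m) r s.
Proof.
rewrite /rat_eqmod => ml; rewrite -(subnKC ml) ppowD invfM mulrA => h.
by rewrite -[X in X \is a _](divfK (ppow_neq0 (l - m))) mulrC ppow_intM.
Qed.

End PrimePowers.

Section PAdicNumbers.
Variable p : nat.
Hypothesis p_prime : prime p.

Let p_gt0 : (0 < p)%N := prime_gt0 p_prime.

Definition pden (r : rat) : Prop := exists k : nat, ppow p k * r \is a Num.int.

Lemma pden_int r : r \is a Num.int -> pden r.
Proof. by exists 0%N; rewrite mul1r. Qed.

Lemma pden_add r s : pden r -> pden s -> pden (r + s).
Proof.
move=> [k kr] [l ls]; exists (k + l)%N.
rewrite ppowD mulrDr; apply: rpredD; first by rewrite mulrAC mulrC ppow_intM.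
by rewrite -mulrA ppow_intM.
Qed.

Lemma pden_opp r : pden r -> pden (- r).
Proof. by move=> [k kr]; exists k; rewrite mulrN rpredN. Qed.

Lemma pden_pnat r : pden r <-> p.-nat `|denq r|%N.
Proof.
split=> [[k /floorK kr]|dr].
  set z := Num.floor _ in kr.
  have e : ((p ^ k)%N%:Z * numq r = z * denq r)%R.
    apply/eqP; rewrite -(eqr_int rat) !rmorphM /= numqE kr mulrA.
    by rewrite -[(p ^ k)%N%:~R]/((p ^ k)%N%:R) natrX.
  have : (denq r %| (p ^ k)%N%:Z * numq r)%Z by rewrite e dvdz_mull.
  rewrite dvdzE abszM Gauss_dvdl; last by rewrite coprime_sym coprime_num_den.
  by move/pnat_dvd; apply; rewrite pnatX pnat_id.
exists (logn p `|denq r|).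
rewrite /ppow -natrX -p_part part_pnat_id // natr_absz gtr0_norm ?denq_gt0 //.
by rewrite mulrC -numqE intr_int.
Qed.

Lemma isQp_ratmodE x n : isQp p x -> ratmod (x n) (ppow p n) = x n.
Proof. by move=> Qx; have [_ [x_ge0 [x_lt _]]] := Qx n; rewrite ratmod_id // x_ge0 x_lt. Qed.

Lemma isQp_eqmod_succ x n : isQp p x -> rat_eqmod (ppow p n) (x n) (x n.+1).
Proof.
move=> Qx; have [_ [_ [_ ->]]] := Qx n.
exact/rat_eqmod_sym/rat_eqmod_ratmod/ppow_neq0.
Qed.

Lemma isQp_ratmod x m l : isQp p x -> (m <= l)%N -> x m = ratmod (x l) (ppow p m).
Proof.
move=> Qx /subnK <-; elim: (l - m)%N => [|k IHk]; first by rewrite isQp_ratmodE.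
rewrite IHk addSn; apply: ratmod_eqmod; first exact: ppow_gt0.
by apply: (rat_eqmod_ppow_le p_gt0 (leq_addl k m)); apply: isQp_eqmod_succ.
Qed.

Lemma isQp_pden x n : isQp p x -> pden (x n).
Proof. by move=> Qx; have [/pden_pnat] := Qx n. Qed.

Lemma isQp_ratmod_seq (f : nat -> rat) : (forall n, pden (f n)) ->
  (forall n, rat_eqmod (ppow p n) (f n) (f n.+1)) ->
  isQp p (fun n => ratmod (f n) (ppow p n)).
Proof.
move=> df ef n; have /andP[mod_ge0 mod_lt] := ratmod_bounds (f n) (ppow_gt0 p_gt0 n).
split.
  apply/pden_pnat/pden_add; first exact: df.
  exact/pden_opp/pden_int/ppow_intM/intr_int.
do 2!split=> //; apply: ratmod_eqmod; first exact: ppow_gt0.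
apply: (rat_eqmod_trans (ef n) _); apply: (rat_eqmod_ppow_le p_gt0 (leqnSn n)).
exact/rat_eqmod_ratmod/ppow_neq0.
Qed.

Lemma isQp_add x y : isQp p x -> isQp p y -> isQp p (qp_add p x y).
Proof.
move=> Qx Qy; apply: isQp_ratmod_seq => n.
  by apply: pden_add; apply: isQp_pden.
by rewrite /rat_eqmod opprD addrACA mulrDl rpredD ?isQp_eqmod_succ.
Qed.

Lemma isQp_opp x : isQp p x -> isQp p (qp_opp p x).
Proof.
move=> Qx; apply: isQp_ratmod_seq => n; first exact/pden_opp/isQp_pden.
by rewrite /rat_eqmod -opprD mulNr rpredN; apply: isQp_eqmod_succ.
Qed.

Lemma isQp_zero : isQp p (qp_zero p).
Proof. by move=> n; rewrite /qp_zero ratmod0 ppow_gt0. Qed.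

Lemma ppow_gt1 n : 1 < ppow p n.+1.
Proof. by rewrite exprn_egt1 // ltr1n prime_gt1. Qed.

Lemma qp_oneE n : qp_one p n = (n != 0%N)%:R.
Proof.
rewrite /qp_one; case: n => [|n]; first by rewrite ratmod1 floor1 subrr.
by rewrite ratmod_id // ler01 ppow_gt1.
Qed.

Lemma isQp_one : isQp p (qp_one p).
Proof.
move=> n; rewrite !qp_oneE /=; case: n => [|n]; do !split => //.
- exact: ppow_gt1.
- by rewrite ratmod_id // ler01 ppow_gt1.
Qed.

Lemma in_pnZp_le x m n : isQp p x -> in_pnZp p x m -> n <= m -> in_pnZp p x n.
Proof.
rewrite /in_pnZp => Qx; case: m => m; case: n => n //=.
- by rewrite lez_nat => xm nm; rewrite (isQp_ratmod Qx nm) xm ratmod0.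
- by move=> x0 _; rewrite (isQp_ratmod Qx (leq0n m)) x0 ratmod0 mulr0.
- rewrite !NegzE lerN2 lez_nat ltnS => xm mn.
  by rewrite -(subnKC mn) -addSn ppowD mulrAC mulrC ppow_intM.
Qed.

Lemma in_pnZp_exists x : isQp p x -> exists n, in_pnZp p x n.
Proof.
move=> Qx; have [k kx] := isQp_pden 0 Qx.
by exists (Negz k); rewrite /in_pnZp /= -addn1 ppowD mulrAC mulrC ppow_intM.
Qed.

Lemma in_pnZp_zero n : in_pnZp p (qp_zero p) n.
Proof. by rewrite /in_pnZp /qp_zero; case: ifP => // _; rewrite mulr0. Qed.

Lemma in_pnZp_add x y n :
  in_pnZp p x n -> in_pnZp p y n -> in_pnZp p (qp_add p x y) n.
Proof.
rewrite /in_pnZp /qp_add; case: ifP => _; first by move=> -> ->; rewrite addr0 ratmod0.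
move=> xn yn; rewrite ratmod1 mulrBr mulrDr.
by apply: rpredB; [exact: rpredD | exact/ppow_intM/intr_int].
Qed.

Lemma in_pnZp_subl x y n : isQp p x ->
  in_pnZp p (qp_add p x (qp_opp p y)) n -> in_pnZp p y n -> in_pnZp p x n.
Proof.
rewrite /in_pnZp /qp_add /qp_opp => Qx; case: ifP => _.
  by move=> + yn; rewrite yn oppr0 ratmod0 addr0 isQp_ratmodE.
rewrite !ratmod1 => xyn yn.
set fy := Num.floor (- y 0%N) in xyn; set fxy := Num.floor _ in xyn.
set u := ppow p `|n| in xyn yn *.
have -> : u * x 0%N = u * (x 0%N + (- y 0%N - fy%:~R) - fxy%:~R) + u * y 0%N
                      + u * fy%:~R + u * fxy%:~R by ring.
by rewrite !rpredD //; exact/ppow_intM/intr_int.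
Qed.

Lemma qp_dexp_eq0 x : x 0%N = 0 -> qp_dexp p x = 0%N.
Proof. by move=> x0; rewrite /qp_dexp x0 logn1. Qed.

Lemma in_pnZp_mull a x n : isQp p a -> in_pnZp p a 0 ->
  in_pnZp p x n -> in_pnZp p (qp_mul p a x) n.
Proof.
rewrite /in_pnZp /qp_mul /= => Qa a0; rewrite (qp_dexp_eq0 a0) addn0.
case: ifP => _; first by move=> ->; rewrite mulr0 ratmod0.
have a_int : a (qp_dexp p x) \is a Num.int.
  have := isQp_ratmod Qa (leq0n (qp_dexp p x)).
  by rewrite a0 ratmod1 => /eqP; rewrite eq_sym subr_eq0 => /eqP ->; rewrite intr_int.
move=> xn; rewrite add0n ratmod1 mulrBr mulrCA.
by apply: rpredB; [exact: rpredM | exact/ppow_intM/intr_int].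
Qed.

Lemma qp_add0r x : isQp p x -> qp_add p (qp_zero p) x = x.
Proof. by move=> Qx; apply: funext => n; rewrite /qp_add add0r isQp_ratmodE. Qed.

Lemma qp_addr0 x : isQp p x -> qp_add p x (qp_zero p) = x.
Proof. by move=> Qx; apply: funext => n; rewrite /qp_add addr0 isQp_ratmodE. Qed.

Lemma qp_opp0 : qp_opp p (qp_zero p) = qp_zero p.
Proof. by apply: funext => n; rewrite /qp_opp oppr0 ratmod0. Qed.

Lemma qp_mul0r x : qp_mul p (qp_zero p) x = qp_zero p.
Proof. by apply: funext => n; rewrite /qp_mul mul0r ratmod0. Qed.

Lemma qp_mulr0 x : qp_mul p x (qp_zero p) = qp_zero p.
Proof. by apply: funext => n; rewrite /qp_mul mulr0 ratmod0. Qed.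

Lemma qp_mulr1 a : isQp p a -> in_pnZp p a 0 -> qp_mul p a (qp_one p) = a.
Proof.
move=> Qa a0; apply: funext => n.
rewrite /qp_mul !qp_dexp_eq0 ?qp_oneE // !addn0.
case: n => [|n]; first by rewrite mulr0 ratmod0 a0.
by rewrite mulr1 isQp_ratmodE.
Qed.

End PAdicNumbers.

Section PAdicAbs.
Variables (R : realType) (p : nat).
Hypothesis p_prime : prime p.

Definition ppow_abs (n : int) : R := p%:R ^ (- n).

Lemma ppow_abs_gt0 n : 0 < ppow_abs n.
Proof. by rewrite exprz_gt0 // ltr0n prime_gt0. Qed.

Lemma ppow_abs_le m n : (ppow_abs m <= ppow_abs n) = (n <= m).
Proof. by rewrite ler_eXz2l ?ltr1n ?prime_gt1 // lerN2. Qed.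

Lemma ppow_abs0 : ppow_abs 0 = 1.
Proof. by rewrite /ppow_abs oppr0 expr0z. Qed.

Lemma ppow_abs_small (e : R) : 0 < e -> exists k : nat, ppow_abs k < e.
Proof.
move=> e_gt0; exists (Num.truncn e^-1).+1; set k := (Num.truncn _).+1.
have pk_gt0 : 0 < (p%:R : R) ^+ k by rewrite exprn_gt0 // ltr0n prime_gt0.
rewrite /ppow_abs -invr_expz -[e]invrK ltf_pV2 ?posrE ?invr_gt0 //.
apply: lt_le_trans (truncnS_gt e^-1) _.
by rewrite -exprnP -natrX ler_nat ltnW // ltn_expl // prime_gt1.
Qed.

Let abs_values x := [set ppow_abs n | n in [set n : int | in_pnZp p x n]].

Lemma padic_abs_le x n : in_pnZp p x n -> padic_abs R p x <= ppow_abs n.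
Proof.
move=> xn; apply: (@ge_inf _ (abs_values x)); last by exists n.
by exists 0 => _ [m _ <-]; exact/ltW/ppow_abs_gt0.
Qed.

Lemma padic_abs_ge x (r : R) : isQp p x ->
  (forall n, in_pnZp p x n -> r <= ppow_abs n) -> r <= padic_abs R p x.
Proof.
move=> Qx r_lb; apply: lb_le_inf => [|_ [n xn <-]]; last exact: r_lb.
by have [n xn] := in_pnZp_exists p_prime Qx; exists (ppow_abs n), n.
Qed.

Lemma padic_abs_leP x n : isQp p x ->
  reflect (in_pnZp p x n) (padic_abs R p x <= ppow_abs n).
Proof.
move=> Qx; apply: (iffP idP) => [x_le|]; last exact: padic_abs_le.
apply: contrapT => xNn.
suff : ppow_abs (n - 1) <= ppow_abs n by rewrite ppow_abs_le; lia.
apply: le_trans x_le; apply: padic_abs_ge => // m xm.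
rewrite ppow_abs_le -ltzD1 subrK ltNge; apply/negP => nm.
exact/xNn/(in_pnZp_le p_prime Qx xm).
Qed.

Lemma padic_abs_le1P x : isQp p x ->
  reflect (in_pnZp p x 0) (padic_abs R p x <= 1).
Proof. by rewrite -ppow_abs0; apply: padic_abs_leP. Qed.

Lemma padic_abs_mono x y : isQp p x ->
  (forall n, in_pnZp p x n -> in_pnZp p y n) -> padic_abs R p y <= padic_abs R p x.
Proof. by move=> Qx xy; apply: padic_abs_ge => // n /xy; apply: padic_abs_le. Qed.

Lemma padic_abs0_lt (e : R) : 0 < e -> padic_abs R p (qp_zero p) < e.
Proof.
move=> /ppow_abs_small[k ke].
exact: le_lt_trans (padic_abs_le (in_pnZp_zero p k)) ke.
Qed.

Lemma padic_abs_argmax (I : Type) (i0 : I) (y : I -> qp p) :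
  (forall i, isQp p (y i)) -> (forall i, in_pnZp p (y i) 0) ->
  exists i, forall j, padic_abs R p (y j) <= padic_abs R p (y i).
Proof.
move=> Qy y_Zp; have Nle k : Negz k <= 0 by [].
have [[m0 ym0]|y0] := pselect (exists m : nat, exists i, ~ in_pnZp p (y i) m).
  pose P (m : nat) := `[< exists i, ~ in_pnZp p (y i) m >].
  have [m /asboolP[i yNm] m_min] := ex_minnP (ex_intro P m0 (asboolT ym0)).
  exists i => j; apply: padic_abs_mono => // -[k yik|k _]; last first.
    exact: in_pnZp_le (y_Zp j) (Nle k).
  apply: contrapT => yjNk; apply/yNm/(in_pnZp_le p_prime (Qy i) yik).
  by rewrite lez_nat; apply/m_min/asboolP; exists j.
exists i0 => j; apply: padic_abs_mono => // -[k _|k _].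
  by apply: contrapT => yjNk; apply: y0; exists k, j.
exact: in_pnZp_le (y_Zp j) (Nle k).
Qed.

End PAdicAbs.

Lemma seq_argmax d (T : orderType d) (I : eqType) (s : seq I) (f : I -> T) i0 :
  i0 \in s -> exists2 i, i \in s & forall j, j \in s -> (f j <= f i)%O.
Proof.
elim: s i0 => // a s IHs i0 _; case: s IHs => [_|b s IHs].
  by exists a => [|j]; rewrite ?mem_seq1 // => /eqP ->.
have [i si imax] := IHs b (mem_head b s).
have [fai|fia] := leP (f a) (f i).
  by exists i => [|j]; rewrite in_cons ?si ?orbT // => /predU1P[->|/imax].
exists a => [|j]; rewrite ?mem_head // in_cons => /predU1P[->//|/imax fji].
exact: le_trans fji (ltW fia).
Qed.

Lemma finite_set_argmax d (T : orderType d) (I : eqType) (S : set I) (f : I -> T) :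
  finite_set S -> S !=set0 -> exists2 i, S i & forall j, S j -> (f j <= f i)%O.
Proof.
move=> /finite_seqP[s ->] [i0 si0].
by have [i si imax] := seq_argmax f si0; exists i.
Qed.

Section SequenceSpace.
Variables (R : realType) (p : nat) (X : countType).
Hypothesis p_prime : prime p.

Definition vzero : X -> qp p := fun=> qp_zero p.

Definition ZpX (xi : X -> qp p) : Prop :=
  forall i, isQp p (xi i) /\ in_pnZp p (xi i) 0.

Lemma QpX_ZpX xi : ZpX xi -> QpX R p X xi.
Proof.
move=> Zxi; split=> [i|]; first by case: (Zxi i).
rewrite (_ : [set i | _] = set0) // -subset0 => i /=.
by case: (Zxi i) => Qxi /(padic_abs_le1P R p_prime Qxi); rewrite leNgt => /negP.
Qed.

Lemma ZpX_zero : ZpX vzero.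
Proof. by move=> i; split; [exact: isQp_zero | exact: in_pnZp_zero]. Qed.

Lemma ZpX_delta j : ZpX (delta p X j).
Proof.
move=> i; rewrite /delta; case: eqP => _; last exact: ZpX_zero.
by split; [exact: isQp_one | rewrite /in_pnZp /= qp_oneE].
Qed.

Lemma ZpX_slab0 xi : ZpX xi <-> slab R p X set0 xi.
Proof.
split=> [Zxi|[Qxi xi_le1] i]; last by split=> //; apply/padic_abs_le1P/xi_le1.
by split=> i; case: (Zxi i) => // Qxi xi0 _; apply/padic_abs_le1P.
Qed.

Lemma QpX_slab P xi : finite_set P -> slab R p X P xi -> QpX R p X xi.
Proof.
move=> finP [Qxi xi_le1]; split=> //; apply: sub_finite_set finP => i /= xi_gt1.
by apply: contrapT => /xi_le1; rewrite leNgt xi_gt1.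
Qed.

Lemma in_pnZp_near a b n : isQp p a -> isQp p b ->
  padic_abs R p (qp_add p a (qp_opp p b)) < ppow_abs R p n ->
  in_pnZp p b n -> in_pnZp p a n.
Proof.
move=> Qa Qb /ltW ab_small; apply: in_pnZp_subl => //.
exact/(padic_abs_leP R p_prime n (isQp_add p_prime Qa (isQp_opp p_prime Qb))).
Qed.

Lemma tau_open_coord i n : tau_open R p X [set xi | QpX R p X xi /\ in_pnZp p (xi i) n].
Proof.
split=> [xi []//|P finP xi [[[Qxi _] xin] _]].
exists [set i]; split; first exact: finite_set1.
exists (ppow_abs R p n); split; first exact: ppow_abs_gt0.
move=> eta sl_eta near_eta; have QXeta := QpX_slab finP sl_eta.
split=> //; split=> //; case: QXeta => Qeta _.
exact: in_pnZp_near (near_eta i erefl) xin.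
Qed.

Lemma tau_open_ZpX : tau_open R p X ZpX.
Proof.
split=> [xi /QpX_ZpX//|P finP xi [Zxi _]].
exists P; split=> //; exists (ppow_abs R p 0); split; first exact: ppow_abs_gt0.
move=> eta sl_eta near_eta; split=> // i; case: (sl_eta) => Qeta eta_le1.
split=> //; have [Pi|/eta_le1] := pselect (P i); last exact/padic_abs_le1P.
by case: (Zxi i) => Qxi xi0; apply: in_pnZp_near (near_eta i Pi) xi0.
Qed.

Lemma QpX_has_ubound xi : QpX R p X xi ->
  has_ubound (range (fun i => padic_abs R p (xi i))).
Proof.
move=> [_ fin_large].
have [[i0 large_i0]|no_large] := pselect ([set i | 1 < padic_abs R p (xi i)] !=set0).
  have [t large_t tmax] := finite_set_argmax (fun i => padic_abs R p (xi i))
    fin_large (ex_intro _ i0 large_i0).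
  exists (padic_abs R p (xi t)) => _ [i _ <-].
  have [xi_le1|/tmax//] := leP (padic_abs R p (xi i)) 1.
  exact: le_trans xi_le1 (ltW large_t).
exists 1 => _ [i _ <-]; rewrite leNgt; apply/negP => large_i.
by apply: no_large; exists i.
Qed.

Lemma vnorm_le (i0 : X) xi (r : R) :
  (forall i, padic_abs R p (xi i) <= r) -> vnorm R p X xi <= r.
Proof.
move=> xi_le; apply: ge_sup => [|_ [i _ <-]]; last exact: xi_le.
by exists (padic_abs R p (xi i0)), i0.
Qed.

Lemma ZpX_vnorm_le1 xi : QpX R p X xi -> vnorm R p X xi <= 1 -> ZpX xi.
Proof.
move=> QXxi norm_le1 i; case: (QXxi) => Qxi _; split=> //.
apply/(padic_abs_le1P R p_prime (Qxi i))/(le_trans _ norm_le1).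
by apply: ub_le_sup; [exact: QpX_has_ubound | exists i].
Qed.

Definition vrestrict (s : seq X) (xi : X -> qp p) : X -> qp p :=
  fun i => if i \in s then xi i else qp_zero p.

Definition vremove (s : seq X) (xi : X -> qp p) : X -> qp p :=
  fun i => if i \in s then qp_zero p else xi i.

Lemma ZpX_vrestrict s xi : ZpX xi -> ZpX (vrestrict s xi).
Proof. by move=> Zxi i; rewrite /vrestrict; case: ifP => _; [exact: Zxi | exact: ZpX_zero]. Qed.

Lemma ZpX_vremove s xi : ZpX xi -> ZpX (vremove s xi).
Proof. by move=> Zxi i; rewrite /vremove; case: ifP => _; [exact: ZpX_zero | exact: Zxi]. Qed.

Lemma vadd_vrestrict_vremove s xi : ZpX xi ->
  vadd p X (vrestrict s xi) (vremove s xi) = xi.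
Proof.
move=> Zxi; apply: funext => i; have [Qxi _] := Zxi i.
by rewrite /vadd /vrestrict /vremove; case: ifP => _; rewrite (qp_addr0, qp_add0r).
Qed.

Lemma vrestrict_nil xi : vrestrict [::] xi = vzero.
Proof. by []. Qed.

Lemma vrestrict_cons j s xi : ZpX xi -> j \notin s ->
  vrestrict (j :: s) xi = vadd p X (vscale p X (xi j) (delta p X j)) (vrestrict s xi).
Proof.
move=> Zxi jNs; apply: funext => i; have [Qxj xj0] := Zxi j.
rewrite /vadd /vscale /vrestrict /delta in_cons; case: eqP => [->|_] /=.
  by rewrite (negbTE jNs) qp_mulr1 // qp_addr0.
by rewrite qp_mulr0 qp_add0r //; case: ifP => _; [case: (Zxi i) | exact: isQp_zero].
Qed.

End SequenceSpace.

Arguments vzero {p X}.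
Arguments ZpX_zero {p X}.

Section BoundedOperator.
Variables (R : realType) (p : nat) (X : countType).
Variable A : (X -> qp p) -> (X -> qp p).
Hypotheses (p_prime : prime p) (A_B : isB R p X A).

Lemma isB_QpX xi : QpX R p X xi -> QpX R p X (A xi).
Proof. by case: A_B => A_QpX _ _ _; apply: A_QpX. Qed.

Lemma isQp_mxentry i j : isQp p (mxentry p X A i j).
Proof. by case: (isB_QpX (QpX_ZpX R p_prime (ZpX_delta p_prime j))) => Q _; apply: Q. Qed.

Lemma isB_vzero : A vzero = vzero.
Proof.
case: A_B => _ _ A_scale _.
have Q0 := isQp_zero p_prime.
have Z0 : isZp R p (qp_zero p).
  by split=> //; apply/(padic_abs_le1P R p_prime Q0)/in_pnZp_zero.
have vscale0 xi : vscale p X (qp_zero p) xi = vzero.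
  by apply: funext => i; rewrite /vscale qp_mul0r.
by rewrite -(vscale0 vzero) A_scale ?vscale0 //; exact: (QpX_ZpX R p_prime (ZpX_zero p_prime)).
Qed.

(* A basic neighbourhood of 0 in [slab R p X set0] constrains only finitely
   many coordinates. *)
Lemma isB_vanishing_near0 (B : set (X -> qp p)) : tau_open R p X B -> B vzero ->
  exists2 F : set X, finite_set F &
    forall eta, ZpX eta -> (forall i, F i -> eta i = qp_zero p) -> B (A eta).
Proof.
case: A_B => _ _ _ A_cont B_open B0.
have [_ /(_ set0 (finite_set0 X) vzero)] := A_cont B B_open.
case=> [|F [finF [e [e_gt0 A_near0]]]].
  split; last exact/(ZpX_slab0 R p_prime)/ZpX_zero.
  by split; [exact/(QpX_ZpX R p_prime)/ZpX_zero | rewrite /preimage /= isB_vzero].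
exists F => // eta Zeta eta0.
have eta_near0 i : F i -> padic_abs R p (qp_add p (eta i) (qp_opp p (vzero i))) < e.
  move=> Fi; rewrite /vzero qp_opp0 eta0 // qp_addr0 ?padic_abs0_lt //.
  exact: isQp_zero p_prime.
by case: (A_near0 eta ((ZpX_slab0 R p_prime eta).1 Zeta) eta_near0) => -[].
Qed.

Lemma isB_vrestrict_in_pnZp xi i n s : ZpX xi ->
  (forall j, in_pnZp p (mxentry p X A i j) n) -> in_pnZp p (A (vrestrict s xi) i) n.
Proof.
case: A_B => _ A_add A_scale _ Zxi col_n.
have QX_vrestrict s' := QpX_ZpX R p_prime (ZpX_vrestrict p_prime s' Zxi).
elim: s => [|j s IHs]; first by rewrite vrestrict_nil isB_vzero; apply: in_pnZp_zero.
have [js|jNs] := boolP (j \in s).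
  suff -> : vrestrict (j :: s) xi = vrestrict s xi by [].
  by apply: funext => y; rewrite /vrestrict in_cons; case: eqP => // ->; rewrite js.
have [Qxj xj0] := Zxi j.
have Zxj : isZp R p (xi j) by split=> //; apply/(padic_abs_le1P R p_prime).
have Z_xj_delta : ZpX (vscale p X (xi j) (delta p X j)).
  move=> y; rewrite /vscale /delta; case: eqP => _; first by rewrite qp_mulr1.
  by rewrite qp_mulr0; exact: ZpX_zero p_prime y.
have QX_delta := QpX_ZpX R p_prime (ZpX_delta p_prime j).
have QX_xj_delta := QpX_ZpX R p_prime Z_xj_delta.
rewrite vrestrict_cons // A_add // A_scale //.
exact: in_pnZp_add (in_pnZp_mull p_prime Qxj xj0 (col_n j)) IHs.
Qed.

Lemma isB_ZpX_in_pnZp xi i n : ZpX xi ->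
  (forall j, in_pnZp p (mxentry p X A i j) n) -> in_pnZp p (A xi i) n.
Proof.
case: A_B => _ A_add _ _ Zxi col_n.
have [F finF A_small] := isB_vanishing_near0 (tau_open_coord R p_prime i n)
  (conj (QpX_ZpX R p_prime (ZpX_zero p_prime)) (in_pnZp_zero p n)).
have [s Fs] := (finite_seqP F).1 finF.
have Z_vremove := ZpX_vremove p_prime s Zxi.
rewrite -(vadd_vrestrict_vremove s Zxi) A_add; last 2 first.
- exact: (QpX_ZpX R p_prime (ZpX_vrestrict p_prime s Zxi)).
- exact: (QpX_ZpX R p_prime Z_vremove).
apply: in_pnZp_add; first exact: isB_vrestrict_in_pnZp.
by case: (A_small _ Z_vremove) => // y; rewrite Fs /vremove /= => ->.
Qed.

Lemma mxentry_Zp_cofinite : exists2 F : set X, finite_set F &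
  forall j, ~ F j -> forall i, in_pnZp p (mxentry p X A i j) 0.
Proof.
have [F finF A_small] := isB_vanishing_near0 (tau_open_ZpX R X p_prime) (ZpX_zero p_prime).
exists F => // j Fj i.
have delta_j0 y : F y -> delta p X j y = qp_zero p.
  by move=> Fy; rewrite /delta; case: eqP => // yj; rewrite yj in Fy.
by case: (A_small _ (ZpX_delta p_prime j) delta_j0 i).
Qed.

Lemma mxentry_large_finite :
  finite_set [set ij : X * X | 1 < padic_abs R p (mxentry p X A ij.1 ij.2)].
Proof.
have [F finF A_ij0] := mxentry_Zp_cofinite.
apply: (@sub_finite_set _ _ (\bigcup_(j in F)
  ([set i | 1 < padic_abs R p (mxentry p X A i j)] `*` [set j]))).
  move=> [i j] /= large_ij; exists j => //.
  apply: contrapT => /A_ij0/(_ i)/(padic_abs_le1P R p_prime (isQp_mxentry i j)).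
  by rewrite leNgt large_ij.
apply: bigcup_finite => // j _; apply: finite_setX; last exact: finite_set1.
by case: (isB_QpX (QpX_ZpX R p_prime (ZpX_delta p_prime j))).
Qed.

Lemma mxentry_argmax (x0 : X) : exists i j, forall i' j',
  padic_abs R p (mxentry p X A i' j') <= padic_abs R p (mxentry p X A i j).
Proof.
pose entry (ij : X * X) := mxentry p X A ij.1 ij.2.
have [[ij0 large_ij0]|small] := pselect (exists ij, 1 < padic_abs R p (entry ij)).
  have [[i j] large_ij ijmax] := finite_set_argmax (fun ij => padic_abs R p (entry ij))
    mxentry_large_finite (ex_intro _ ij0 large_ij0).
  exists i, j => i' j'; have [le1|/(ijmax (i', j'))//] := leP (padic_abs R p (entry (i', j'))) 1.
  exact: le_trans le1 (ltW large_ij).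
have Zentry ij : in_pnZp p (entry ij) 0.
  apply/(padic_abs_le1P R p_prime (isQp_mxentry _ _)); rewrite leNgt.
  by apply/negP => large; apply: small; exists ij.
have [[i j] ijmax] := padic_abs_argmax R p_prime (x0, x0) (fun ij => isQp_mxentry _ _) Zentry.
by exists i, j => i' j'; apply: (ijmax (i', j')).
Qed.

Lemma opnorm_le_mxentry i j :
  (forall i' j', padic_abs R p (mxentry p X A i' j') <= padic_abs R p (mxentry p X A i j)) ->
  (opnorm R p X A <= (padic_abs R p (mxentry p X A i j))%:E)%E.
Proof.
move=> ijmax; apply: ge_ereal_sup => _ [xi [QXxi xi_le1] <-]; rewrite lee_fin.
apply: (vnorm_le i) => i'; apply: (padic_abs_mono R p_prime (isQp_mxentry i j)) => n ij_n.
apply: isB_ZpX_in_pnZp (ZpX_vnorm_le1 p_prime QXxi xi_le1) _ => j'.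
apply/(padic_abs_leP R p_prime n (isQp_mxentry i' j')).
exact: le_trans (ijmax i' j') (padic_abs_le R p_prime ij_n).
Qed.

Lemma mxentry_le_opnorm i j :
  ((padic_abs R p (mxentry p X A i j))%:E <= opnorm R p X A)%E.
Proof.
have QX_delta := QpX_ZpX R p_prime (ZpX_delta p_prime j).
apply: le_trans (ereal_sup_ubound _); last first.
  exists (delta p X j) => //; split=> //; apply: (vnorm_le j) => y.
  by case: (ZpX_delta p_prime j y) => Qy y0; apply/(padic_abs_le1P R p_prime Qy).
rewrite lee_fin; apply: ub_le_sup; last by exists i.
exact: QpX_has_ubound (isB_QpX QX_delta).
Qed.

End BoundedOperator.

Theorem lemma2p27 (R : realType) (p : nat) (X : countType) (x0 : X)
  (A : (X -> qp p) -> (X -> qp p)) :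
  prime p -> isB R p X A ->
  exists i j : X,
    (forall i' j' : X, padic_abs R p (mxentry p X A i' j') <= padic_abs R p (mxentry p X A i j)) /\
    opnorm R p X A = (padic_abs R p (mxentry p X A i j))%:E.
Proof.
move=> p_prime A_B; have [i [j ijmax]] := mxentry_argmax p_prime A_B x0.
exists i, j; split=> //; apply/eqP; rewrite eq_le.
by rewrite opnorm_le_mxentry // mxentry_le_opnorm.
Qed.
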